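(* The following two statements are equivalent. (A) For every finite nonempty LCM-closed set $\mathcal{N}\subseteq\mathbb{N}^+$ containing at least one element different from $1$, there exists an integer $d>1$ such that $\#\{n\in\mathcal{N}: d\mid n\}\ge \tfrac12\#\mathcal{N}$. (B) (Union-closed sets conjecture) For every finite union-closed family $\mathcal{S}$ of finite sets having at least one nonempty member, there exists an element $x\in\bigcup\mathcal{S}$ such that $\#\{A\in\mathcal{S}:x\in A\}\ge\tfrac12\#\mathcal{S}$.
   Context: $\mathbb{N}^+=\{1,2,3,\dots\}$. A nonempty $\mathcal{N}\subseteq\mathbb{N}^+$ is LCM-closed if $m,n\in\mathcal{N}$ implies $\mathrm{lcm}(m,n)\in\mathcal{N}$. A family $\mathcal{S}$ of sets is union-closed if $A,B\in\mathcal{S}$ implies $A\cup B\in\mathcal{S}$. *)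

From mathcomp Require Import all_boot.
Set Implicit Arguments. Unset Strict Implicit. Unset Printing Implicit Defensive.

(* A finite set of positive integers is represented by a duplicate-free
   sequence [N : seq nat]; its cardinality is [size N]. *)
Definition lcm_closed (N : seq nat) : Prop :=
  forall m n, m \in N -> n \in N -> lcmn m n \in N.

Definition statementA : Prop :=
  forall N : seq nat,
    uniq N -> N != [::] -> all (fun n => 0 < n) N -> lcm_closed N ->
    (exists2 n, n \in N & n != 1) ->
    exists2 d, 1 < d & size N <= 2 * count (fun n => d %| n) N.

Definition union_closed (T : finType) (S : {set {set T}}) : Prop :=
  forall A B, A \in S -> B \in S -> A :|: B \in S.

(* Since the family is
   finite and consists of finite sets, all elements live in the finite set
   U = \bigcup S, so we may take the ground type to be an arbitrary finType. *)
Definition statementB : Prop :=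
  forall (T : finType) (S : {set {set T}}),
    union_closed S -> (exists2 A, A \in S & A != set0) ->
    exists2 x, x \in \bigcup_(A in S) A &
      #|S| <= 2 * #|[set A in S | x \in A]|.

From mathcomp Require Import all_boot.

Set Implicit Arguments.
Unset Strict Implicit.
Unset Printing Implicit Defensive.

(* (B) implies (A): send n to the set of prime powers dividing it; this turns
   lcm into union, is injective, and a prime power q divides exactly the
   members of N whose image contains q.
   (A) implies (B): label the points of the ground set by distinct primes and
   send A to the product of its labels; this turns union into lcm, and since
   the divisors counted in (A) may be replaced by their smallest prime factor,
   that prime is the label of a point lying in at least half of the sets. *)

Lemma card_set_map_in (T : eqType) (aT : finType) (g : T -> aT) (P : pred aT)
    (s : seq T) :
  uniq s -> {in s &, injective g} ->
  #|[set a in map g s | P a]| = count (P \o g) s.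
Proof.
move=> s_uniq g_inj.
have -> : [set a in map g s | P a] = [set a in filter P (map g s)].
  by apply/setP => a; rewrite !inE mem_filter andbC.
rewrite cardsE (card_uniqP _) ?size_filter ?count_map //.
by rewrite filter_uniq // map_inj_in_uniq.
Qed.

Lemma count_enum_set (T : finType) (S : {set T}) (P : pred T) :
  count P (enum S) = #|[set A in S | P A]|.
Proof.
rewrite -[count _ _](@card_set_map_in T T id P _ (enum_uniq S)) ?map_id //.
by apply: eq_card => A; rewrite !inE mem_enum.
Qed.

Lemma count_dvdn_pdiv d (s : seq nat) :
  count (fun n => d %| n) s <= count (fun n => pdiv d %| n) s.
Proof. by apply: sub_count => n /= /(dvdn_trans (pdiv_dvd d)). Qed.

Lemma logn_prod (I : Type) (r : seq I) (P : pred I) (F : I -> nat) q :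
  (forall i, P i -> 0 < F i) ->
  logn q (\prod_(i <- r | P i) F i) = \sum_(i <- r | P i) logn q (F i).
Proof.
move=> F_gt0; apply/esym.
suff [] : \sum_(i <- r | P i) logn q (F i) = logn q (\prod_(i <- r | P i) F i)
          /\ 0 < \prod_(i <- r | P i) F i by [].
apply: (big_rec2 (fun a b => a = logn q b /\ 0 < b)) => [|i a b Pi [-> b_gt0]].
  by rewrite logn1.
by rewrite lognM ?muln_gt0 ?F_gt0 ?b_gt0.
Qed.

Fixpoint prime_seq (i : nat) : nat :=
  if i is j.+1 then sval (prime_above (prime_seq j)) else 2.

Lemma prime_seqS i : prime_seq i.+1 = sval (prime_above (prime_seq i)).
Proof. by []. Qed.

Lemma prime_seq_prime i : prime (prime_seq i).
Proof. case: i => [|i]; first by []. by rewrite prime_seqS; case: prime_above. Qed.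

Lemma prime_seq_ltS i : prime_seq i < prime_seq i.+1.
Proof. by rewrite prime_seqS; case: prime_above. Qed.

Lemma prime_seq_inj : injective prime_seq.
Proof.
have lt_prime_seq : {homo prime_seq : i j / i < j}.
  by apply: (homo_ltn _ prime_seq_ltS); apply: ltn_trans.
move=> i j eq_ij; apply/eqP.
by case: ltngtP => // /lt_prime_seq; rewrite eq_ij ltnn.
Qed.

Section PrimeCode.
Variables (T : finType) (p : T -> nat).
Hypotheses (p_prime : forall x, prime (p x)) (p_inj : injective p).

Definition prime_code (A : {set T}) : nat := \prod_(x in A) p x.

Lemma prime_code_gt0 A : 0 < prime_code A.
Proof. by rewrite prodn_gt0 // => x; rewrite prime_gt0. Qed.

Lemma logn_prime_code q A : logn q (prime_code A) = \sum_(x in A) (q == p x).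
Proof.
rewrite logn_prod => [|x _]; last exact: prime_gt0.
by apply: eq_bigr => x _; rewrite logn_prime.
Qed.

Lemma logn_prime_code_label y A : logn (p y) (prime_code A) = (y \in A).
Proof.
rewrite logn_prime_code; under eq_bigr do rewrite (inj_eq p_inj).
have [yA | yA] := boolP (y \in A).
  rewrite (bigD1 y) //= eqxx big1 // => x /andP [_].
  by rewrite eq_sym => /negbTE ->.
by rewrite big1 // => x; case: eqP => // <-; rewrite (negbTE yA).
Qed.

Lemma logn_prime_code_unlabelled q A :
  (forall x, p x != q) -> logn q (prime_code A) = 0.
Proof.
move=> q_unlabelled; rewrite logn_prime_code big1 // => x _.
by rewrite eq_sym (negbTE (q_unlabelled x)).
Qed.

Lemma prime_code_inj : injective prime_code.
Proof.
move=> A B eq_code; apply/setP => y.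
have := congr1 (logn (p y)) eq_code; rewrite !logn_prime_code_label.
by case: (y \in A); case: (y \in B).
Qed.

Lemma prime_code_setU A B :
  prime_code (A :|: B) = lcmn (prime_code A) (prime_code B).
Proof.
apply: eqn_from_log; rewrite ?lcmn_gt0 ?prime_code_gt0 // => q.
rewrite logn_lcm ?prime_code_gt0 //.
have [y /eqP <- | q_unlabelled] := pickP (fun y => p y == q).
  by rewrite !logn_prime_code_label inE; case: (y \in A); case: (y \in B).
by rewrite !logn_prime_code_unlabelled // => x; rewrite q_unlabelled.
Qed.

Lemma prime_dvdn_prime_code q A :
  prime q -> (q %| prime_code A) = (0 < logn q (prime_code A)).
Proof. by move=> q_prime; rewrite logn_gt0 mem_primes q_prime prime_code_gt0. Qed.

Lemma dvdn_prime_code_label y A : (p y %| prime_code A) = (y \in A).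
Proof. by rewrite prime_dvdn_prime_code // logn_prime_code_label lt0b. Qed.

Lemma dvdn_prime_code_unlabelled q A :
  prime q -> (forall x, p x != q) -> (q %| prime_code A) = false.
Proof.
move=> q_prime q_unlabelled.
by rewrite prime_dvdn_prime_code // logn_prime_code_unlabelled.
Qed.

End PrimeCode.

Lemma statementB_of_statementA : statementA -> statementB.
Proof.
move=> HA T S S_closed [A0 A0S /set0Pn [y0 y0A0]].
pose p (x : T) := prime_seq (enum_rank x).
have p_prime x : prime (p x) by apply: prime_seq_prime.
have p_inj : injective p by move=> x x' /prime_seq_inj/ord_inj/enum_rank_inj.
have S_gt0 : 0 < #|S| by apply/card_gt0P; exists A0.
pose N := map (prime_code p) (enum S).
have [d d_gt1 hd] : exists2 d, 1 < d & size N <= 2 * count (fun n => d %| n) N.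
  apply: HA.
  - by rewrite (map_inj_uniq (prime_code_inj p_prime p_inj)) enum_uniq.
  - apply/eqP => /(congr1 size); rewrite size_map -cardE => S0.
    by rewrite S0 in S_gt0.
  - by apply/allP => _ /mapP [A _ ->]; apply: prime_code_gt0 p_prime A.
  - move=> _ _ /mapP [A AS ->] /mapP [B BS ->].
    by rewrite -prime_code_setU // map_f // mem_enum S_closed // -mem_enum.
  - exists (prime_code p A0); first by rewrite map_f ?mem_enum.
    apply: contraTneq (prime_gt1 (p_prime y0)) => code1.
    have := dvdn_prime_code_label p_prime p_inj y0 A0.
    by rewrite code1 y0A0 dvdn1 => /eqP ->.
have := leq_trans hd (leq_mul (leqnn 2) (count_dvdn_pdiv d N)).
have q_prime := pdiv_prime d_gt1; set q := pdiv d in q_prime *.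
rewrite size_map -cardE count_map.
have [y /eqP <- | q_unlabelled] := pickP (fun y => p y == q); last first.
  have q_out x : p x != q by rewrite q_unlabelled.
  rewrite (eq_count (a2 := pred0)) => [|A]; last exact: dvdn_prime_code_unlabelled.
  by rewrite count_pred0 leqn0 => /eqP S0; rewrite S0 in S_gt0.
rewrite (eq_count (dvdn_prime_code_label p_prime p_inj y)) count_enum_set => hy.
exists y => //.
have /card_gt0P [A] : 0 < #|[set A in S | y \in A]|.
  by rewrite lt0n; apply: contraTneq hy => ->; rewrite muln0 -ltnNge.
by rewrite inE => /andP [AS yA]; apply/bigcupP; exists A.
Qed.

Definition prime_power (q : nat) : bool :=
  (1 < q) && (pdiv q ^ logn (pdiv q) q == q).

Lemma prime_power_exp p k : prime p -> prime_power (p ^ k.+1).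
Proof.
move=> p_prime; rewrite /prime_power pdiv_pfactor // pfactorK // eqxx andbT.
by rewrite -[1](expn0 p) ltn_exp2l // prime_gt1.
Qed.

Lemma prime_power_dvdn_lcm q m n : prime_power q -> 0 < m -> 0 < n ->
  (q %| lcmn m n) = (q %| m) || (q %| n).
Proof.
case/andP => /pdiv_prime p_prime /eqP <- m_gt0 n_gt0.
by rewrite !pfactor_dvdn ?lcmn_gt0 ?m_gt0 // logn_lcm // leq_max.
Qed.

(* Prime powers are cut off at a bound [M] so as to live in a finite type. *)
Definition prime_power_divisors M n : {set 'I_M.+1} :=
  [set q : 'I_M.+1 | prime_power q && (q %| n)].

Lemma prime_power_divisors_lcm M m n : 0 < m -> 0 < n ->
  prime_power_divisors M (lcmn m n) =
    prime_power_divisors M m :|: prime_power_divisors M n.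
Proof.
move=> m_gt0 n_gt0; apply/setP => q; rewrite !inE.
by case q_pp: (prime_power q); rewrite //= prime_power_dvdn_lcm.
Qed.

Lemma prime_power_divisors_pdiv M n : 1 < n -> n <= M ->
  prime_power_divisors M n != set0.
Proof.
move=> n_gt1 n_le_M; have pdiv_le_M : pdiv n < M.+1.
  by rewrite ltnS (leq_trans (dvdn_leq (ltnW n_gt1) (pdiv_dvd n))).
apply/set0Pn; exists (Ordinal pdiv_le_M); rewrite inE /= pdiv_dvd andbT.
by have := prime_power_exp 0 (pdiv_prime n_gt1); rewrite expn1.
Qed.

Lemma prime_power_divisors_subset_dvdn M m n : 0 < m -> m <= M ->
  prime_power_divisors M m \subset prime_power_divisors M n -> m %| n.
Proof.
move=> m_gt0 m_le_M /subsetP sub_mn; apply/dvdn_partP => // r r_pi.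
have r_log : 0 < logn r m by rewrite logn_gt0.
have r_prime : prime r by move: r_pi; rewrite mem_primes => /andP [].
have part_le_M : m`_r < M.+1.
  by rewrite ltnS (leq_trans (dvdn_leq m_gt0 (dvdn_part _ _))).
have /sub_mn : Ordinal part_le_M \in prime_power_divisors M m.
  rewrite inE /= dvdn_part andbT p_part.
  by rewrite -(prednK r_log) prime_power_exp.
by rewrite inE => /andP [].
Qed.

Lemma prime_power_divisors_inj M :
  {in [pred n | 0 < n <= M] &, injective (prime_power_divisors M)}.
Proof.
move=> m n /andP [m_gt0 m_le_M] /andP [n_gt0 n_le_M] eq_mn; apply/eqP.
by rewrite eqn_dvd !(prime_power_divisors_subset_dvdn (M := M)) ?eq_mn.
Qed.

Lemma statementA_of_statementB : statementB -> statementA.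
Proof.
move=> HB N N_uniq _ N_pos N_closed [n0 n0N n0_neq1].
have pos n : n \in N -> 0 < n by apply: (allP N_pos).
pose M := \max_(n <- N) n.
have le_M n : n \in N -> n <= M by move=> nN; apply: leq_bigmax_seq.
pose g := prime_power_divisors M.
have g_inj : {in N &, injective g}.
  by move=> m n mN nN; apply: prime_power_divisors_inj; rewrite inE ?pos ?le_M.
pose S := [set A in map g N].
have S_closed : union_closed S.
  move=> _ _ /[!inE] /mapP [m mN ->] /mapP [n nN ->].
  by rewrite -prime_power_divisors_lcm ?pos // map_f ?N_closed.
have S_nontrivial : exists2 A, A \in S & A != set0.
  exists (g n0); first by rewrite inE map_f.
  by rewrite prime_power_divisors_pdiv ?le_M // ltn_neqAle eq_sym n0_neq1 pos.
have [q /bigcupP [A AS qA] hq] := HB _ S S_closed S_nontrivial.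
have q_pp : prime_power q.
  by move: AS qA; rewrite inE => /mapP [n _ ->]; rewrite inE => /andP [].
exists (val q); first by case/andP: q_pp.
have card_S : #|S| = size N.
  by rewrite cardsE (card_uniqP _) ?size_map // map_inj_in_uniq.
have count_q : count ((fun A => q \in A) \o g) N = count (fun n => q %| n) N.
  by apply: eq_count => n /=; rewrite inE q_pp.
have eq_S_q : [set A in S | q \in A] = [set A in map g N | q \in A].
  by apply/setP => B; rewrite !inE.
by rewrite card_S eq_S_q card_set_map_in // count_q in hq.
Qed.

Theorem theorem1 : statementA <-> statementB.
Proof. split; [exact: statementB_of_statementA | exact: statementA_of_statementB]. Qed.
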